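(* Let $q$ be a prime power, $s\geq1$, $n=q^{s-1}$, and let $\mathcal{RM}_q(1,s-1)$ be the first order $q$-ary Reed-Muller code. Then for every $0<r<s$, \[ W^{(r)}_{\mathcal{RM}_q(1,s-1)}(X,Y)=\begin{bmatrix} s-1\\ r-1\end{bmatrix}_q Y^n+q^r\begin{bmatrix} s-1\\ r\end{bmatrix}_q X^{q^{s-1-r}}\,Y^{q^{s-1}-q^{s-1-r}}, \] and moreover $W^{(0)}_{\mathcal{RM}_q(1,s-1)}(X,Y)=X^n$ and $W^{(s)}_{\mathcal{RM}_q(1,s-1)}(X,Y)=Y^n$.
   Context: The first order $q$-ary Reed-Muller code $\mathcal{RM}_q(1,s-1)$ is the linear $[q^{s-1},s]$ code over $\mathbb{F}_q$ generated by the $s\times q^{s-1}$ matrix whose first row is the all-one row and whose columns, restricted to the remaining $s-1$ rows, run through all vectors of $\mathbb{F}_q^{s-1}$ (each exactly once). For a linear code $C\subseteq\mathbb{F}_q^n$ and a subcode $D$, the support of $D$ is the set of coordinates where some word of $D$ is nonzero, and $\mathrm{wt}(D)$ is its size. The $r$-th generalized weight enumerator is $W^{(r)}_C(X,Y)=\sum_{w=0}^n A^{(r)}_wX^{n-w}Y^w$ where $A^{(r)}_w$ is the number of $r$-dimensional subspaces $D\subseteq C$ with $\mathrm{wt}(D)=w$. $\begin{bmatrix} a\\ b\end{bmatrix}_q$ denotes the Gaussian binomial coefficient. *)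

From HB Require Import structures.
From mathcomp Require Import all_boot all_order all_algebra all_field.
Set Implicit Arguments. Unset Strict Implicit. Unset Printing Implicit Defensive.
Import GRing.Theory.
Local Open Scope ring_scope.

(* Gaussian binomial coefficient [a choose b]_q, as the usual ratio
   prod_{i<b} (q^(a-i) - 1) / prod_{i<b} (q^(i+1) - 1)  (exact division;
   it is 0 when b > a). *)
Definition qbinom (q a b : nat) : nat :=
  ((\prod_(i < b) (q ^ (a - i) - 1)) %/ (\prod_(i < b) (q ^ i.+1 - 1)))%N.

Section Codes.
Variable F : finFieldType.

Definition supp_code (k n : nat) (D : 'M[F]_(k, n)) : {set 'I_n} :=
  [set j | [exists v : 'rV[F]_n, (v <= D)%MS && (v 0 j != 0)]].

Definition wt_code (k n : nat) (D : 'M[F]_(k, n)) : nat := #|supp_code D|.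

(* Subspaces of F^n are represented
   canonically by square matrices D with <<D>> = D. *)
Definition gen_wt_count (k n : nat) (C : 'M[F]_(k, n)) (r w : nat) : nat :=
  #|[set D : 'M[F]_n | [&& (<<D>>%MS == D), \rank D == r,
                          (D <= C)%MS & wt_code D == w]]|.

(* r-th generalized weight enumerator as a bivariate polynomial in
   {poly {poly int}}: the inner variable ('X)%:P plays X, outer 'X plays Y. *)
Definition gen_wt_enum (k n : nat) (C : 'M[F]_(k, n)) (r : nat)
  : {poly {poly int}} :=
  \sum_(w < n.+1) ((gen_wt_count C r w)%:R * 'X^(n - w))%:P * 'X^w.

(* First order q-ary Reed-Muller code RM_q(1, m): generator matrix with
   first row all ones, and columns (below the first row) running through all
   vectors of F^m exactly once (indexed by the finite type 'rV[F]_m). *)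
Definition RMgen (m : nat) : 'M[F]_(1 + m, #|{: 'rV[F]_m}|) :=
  col_mx (const_mx 1) (\matrix_(i < m, j < #|{: 'rV[F]_m}|) (enum_val j) 0 i).

End Codes.

(* An r-dimensional subcode D of RM_q(1, m) consists of the affine functions
   x |-> b + a.x on F^m.  Either D contains the all-one word, and then its
   support is everything, or it does not; then the linear parts of a basis of D
   are independent, the common zeros of D form an affine subspace of dimension
   m - r, and wt(D) = q^m - q^(m-r).  Counting ordered bases gives
   [m, r-1]_q subcodes of the first kind among the [m+1, r]_q subcodes of
   dimension r, and q-Pascal's rule turns the difference into q^r [m, r]_q. *)

From HB Require Import structures.
From mathcomp Require Import all_boot all_order all_algebra all_field.
From mathcomp Require Import zify.
Set Implicit Arguments. Unset Strict Implicit. Unset Printing Implicit Defensive.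
Import GRing.Theory.
Local Open Scope ring_scope.

Section QPowerProducts.
Variable q : nat.
Hypothesis q_gt1 : (1 < q)%N.

Lemma subn_expn_factor x i : (q ^ x - q ^ i = q ^ i * (q ^ (x - i) - 1))%N.
Proof.
have [le_ix | lt_xi] := leqP i x; first by rewrite mulnBr muln1 -expnD subnKC.
have /eqP -> : (x - i == 0)%N by rewrite subn_eq0 ltnW.
by rewrite muln0; apply/eqP; rewrite subn_eq0 leq_exp2l // ltnW.
Qed.

Lemma prod_subn_expn x b :
  (\prod_(i < b) (q ^ x - q ^ i) =
   \prod_(i < b) q ^ i * \prod_(i < b) (q ^ (x - i) - 1))%N.
Proof.
by rewrite -big_split; apply: eq_bigr => i _; rewrite subn_expn_factor.
Qed.

Lemma prod_expn_subn1_rev b :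
  (\prod_(i < b) (q ^ (b - i) - 1) = \prod_(i < b) (q ^ i.+1 - 1))%N.
Proof.
by rewrite (reindex_inj rev_ord_inj); apply: eq_bigr => i _; rewrite subKn.
Qed.

Lemma prod_subn_expnS x k :
  (\prod_(i < k) (q ^ x.+1 - q ^ i.+1) =
   q ^ k * \prod_(i < k) (q ^ x - q ^ i))%N.
Proof.
under eq_bigr => i _ do rewrite !expnS -mulnBr.
by rewrite big_split prod_nat_const card_ord.
Qed.

Lemma prod_subn_expn_recl x k :
  (\prod_(i < k.+1) (q ^ x.+1 - q ^ i) =
   (q ^ x.+1 - 1) * (q ^ k * \prod_(i < k) (q ^ x - q ^ i)))%N.
Proof. by rewrite big_ord_recl expn0 prod_subn_expnS. Qed.

Lemma prod_expn_gt0 b : (0 < \prod_(i < b) q ^ i)%N.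
Proof. by apply: prodn_gt0 => i; rewrite expn_gt0 ltnW. Qed.

Lemma prod_expnS_subn1_gt0 b : (0 < \prod_(i < b) (q ^ i.+1 - 1))%N.
Proof. by apply: prodn_gt0 => i; rewrite subn_gt0 -{1}(expn0 q) ltn_exp2l. Qed.

Lemma prod_subn_expn_gt0 b : (0 < \prod_(i < b) (q ^ b - q ^ i))%N.
Proof.
rewrite prod_subn_expn prod_expn_subn1_rev muln_gt0.
by rewrite prod_expn_gt0 prod_expnS_subn1_gt0.
Qed.

End QPowerProducts.

Section RankFacts.
Variable K : fieldType.

Lemma mxrank_adds_row n p (x : 'rV[K]_n) (M : 'M[K]_(p, n)) :
  \rank (x + M)%MS = (~~ (x <= M)%MS + \rank M)%N.
Proof.
have [le_M_xM eq_M_xM] := mxrank_leqif_sup (addsmxSr x M).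
have [le_xM _] := mxrank_adds_leqif x M.
have := rank_leq_row x.
rewrite addsmx_sub submx_refl andbT in eq_M_xM.
case: (x <= M)%MS eq_M_xM => /eqP; lia.
Qed.

Lemma row_free_col_mx_cons w k n (W : 'M[K]_(w, n)) (x : 'rV[K]_n)
    (B : 'M[K]_(k, n)) :
  row_free (col_mx W (col_mx x B)) =
    row_free (col_mx W B) && ~~ (x <= col_mx W B)%MS.
Proof.
rewrite /row_free.
have -> : \rank (col_mx W (col_mx x B)) = \rank (x + col_mx W B)%MS.
  rewrite -addsmxE -(adds_eqmx (eqmx_refl W) (addsmxE x B)).
  by rewrite -(adds_eqmx (eqmx_refl x) (addsmxE W B)) !addsmxA (addsmxC W x).
rewrite mxrank_adds_row.
have := rank_leq_row (col_mx W B).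
by case: (x <= _)%MS => /=; rewrite ?andbT ?andbF; lia.
Qed.

Lemma mxrank_rsubmx p m (B : 'M[K]_(p, 1 + m)) :
  ~~ (row_mx 1 0 <= B)%MS -> \rank (rsubmx B) = \rank B.
Proof.
set e : 'rV[K]_(1 + m) := row_mx 1 0 => eNB.
apply/eqP; rewrite eqn_leq; apply/andP; split.
  have -> : rsubmx B = B *m col_mx 0 1%:M.
    by rewrite -{2}(hsubmxK B) mul_row_col mulmx0 add0r mulmx1.
  exact: mxrankM_maxl.
have sB : (B <= e + row_mx 0 (rsubmx B))%MS.
  have Bsplit : B = lsubmx B *m e + row_mx 0 (rsubmx B).
    by rewrite mul_mx_row mulmx1 mulmx0 add_row_mx addr0 add0r hsubmxK.
  rewrite {1}Bsplit; apply: addmx_sub_adds; [exact: submxMl | exact: submx_refl].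
have : (e + B <= e + row_mx 0 (rsubmx B))%MS by rewrite addsmx_sub addsmxSl.
move/mxrankS; rewrite mxrank_adds_row eNB.
have [+ _] := mxrank_adds_leqif e (row_mx 0 (rsubmx B)).
by rewrite rank_row_0mx; have := rank_leq_row e; lia.
Qed.

End RankFacts.

Section Subspaces.
Variable F : finFieldType.
Local Notation q := #|F|.
Let q_gt1 : (1 < q)%N := card_finNzRing_gt1 F.

Lemma card_rV_submx n p (A : 'M[F]_(p, n)) :
  #|[set x : 'rV[F]_n | (x <= A)%MS]| = (q ^ \rank A)%N.
Proof.
have -> : [set x : 'rV[F]_n | (x <= A)%MS] =
          [set u *m row_base A | u in [set: 'rV[F]_(\rank A)]].
  apply/setP => x; rewrite inE -(eq_row_base A); apply/idP/imsetP.
    by case/submxP=> u ->; exists u; rewrite ?inE.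
  by case=> u _ ->; rewrite submxMl.
rewrite card_imset; last exact: row_free_inj (row_base_free A).
by rewrite cardsT card_mx mul1n.
Qed.

Lemma card_affine_solutions k p (A : 'M[F]_(k, p)) (c : 'rV[F]_p) :
  (c <= A)%MS -> #|[set x : 'rV[F]_k | x *m A == c]| = (q ^ (k - \rank A))%N.
Proof.
case/submxP=> x0 ->.
have -> : [set x : 'rV[F]_k | x *m A == x0 *m A] =
          [set y + x0 | y in [set y : 'rV[F]_k | (y <= kermx A)%MS]].
  apply/setP => x; rewrite inE; apply/eqP/imsetP => [xA | [y]].
    by exists (x - x0); rewrite ?subrK // inE sub_kermx mulmxBl xA subrr.
  by rewrite inE sub_kermx => /eqP yA ->; rewrite mulmxDl yA add0r.
by rewrite card_imset ?card_rV_submx ?mxrank_ker //; apply: addIr.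
Qed.

Lemma card_row_free_ext w n (W : 'M[F]_(w, n)) p (V : 'M[F]_(p, n)) k :
  row_free W -> (W <= V)%MS ->
  #|[set B : 'M[F]_(k, n) | row_free (col_mx W B) && (B <= V)%MS]| =
    (\prod_(i < k) (q ^ \rank V - q ^ (w + i)))%N.
Proof.
move=> freeW sWV; elim: k => [|k IHk].
  rewrite big_ord0 -[RHS](card_mx F 0 n) -cardsT; apply: eq_card => B.
  rewrite !inE (flatmx0 B) sub0mx andbT /row_free.
  by rewrite rank_col_mx0 addn0.
rewrite big_ord_recr /= -IHk -sum_nat_cond_const -sum1dep_card.
pose cons (Bx : 'M[F]_(k, n) * 'rV[F]_n) : 'M[F]_(1 + k, n) := col_mx Bx.2 Bx.1.
have cons_bij : bijective cons.
  exists (fun B => (dsubmx B, usubmx B)) => [[B x]|B]; last exact: vsubmxK.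
  by rewrite /cons col_mxKu col_mxKd.
rewrite (reindex cons) /=; last exact: onW_bij.
rewrite -(pair_big_dep xpredT
  (fun (B : 'M[F]_(k, n)) (x : 'rV[F]_n) =>
     row_free (col_mx W (col_mx x B)) && (col_mx x B <= V)%MS)
  (fun _ _ => 1%N)) /=.
rewrite [RHS]big_mkcond /=; apply: eq_bigr => B _.
rewrite sum1dep_card.
under eq_finset => x do rewrite row_free_col_mx_cons col_mx_sub.
have [/andP[freeWB sBV]|notWB] := boolP (row_free (col_mx W B) && (B <= V)%MS).
  have sWBV : (col_mx W B <= V)%MS by rewrite col_mx_sub sWV.
  have -> : [set x : 'rV[F]_n | row_free (col_mx W B)
                                && ~~ (x <= col_mx W B)%MS
                                && ((x <= V)%MS && (B <= V)%MS)]
          = [set x | (x <= V)%MS] :\: [set x | (x <= col_mx W B)%MS].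
    by apply/setP => x; rewrite !inE freeWB sBV andbT andbC.
  rewrite cardsDS ?card_rV_submx ?(eqP freeWB) //.
  by apply/subsetP => x; rewrite !inE => /submx_trans->.
apply/eqP; rewrite cards_eq0; apply/eqP/setP => x; rewrite !inE.
by move: notWB; case: (row_free _); case: (B <= V)%MS; rewrite ?andbF.
Qed.

Definition subcodes k n (C : 'M[F]_(k, n)) (r : nat) : {set 'M[F]_n} :=
  [set D : 'M[F]_n | [&& <<D>>%MS == D, \rank D == r & (D <= C)%MS]].

(* Double counting: a subspace D of dimension w + k containing W is
   <<col_mx W B>> for exactly the free extensions B of W inside D. *)
Lemma card_subcodes_sup w n (W : 'M[F]_(w, n)) p (V : 'M[F]_(p, n)) k :
  row_free W -> (W <= V)%MS ->
  (#|[set D in subcodes V (w + k) | (W <= D)%MS]|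
     * \prod_(i < k) (q ^ (w + k) - q ^ (w + i)) =
   \prod_(i < k) (q ^ \rank V - q ^ (w + i)))%N.
Proof.
move=> freeW sWV.
rewrite -(card_row_free_ext k freeW sWV) -[in RHS]sum1dep_card.
rewrite [in RHS](partition_big (fun B => <<col_mx W B>>%MS)
                       (mem [set D in subcodes V (w + k) | (W <= D)%MS])) /=.
  rewrite -sum_nat_const; apply: eq_bigr => D; rewrite !inE.
  case/andP=> /and3P[/eqP genD /eqP rD sDV] sWD.
  rewrite -[in LHS]rD -(card_row_free_ext k freeW sWD) -sum1dep_card.
  apply: eq_bigl => B; rewrite -andbA; apply: andb_id2l => freeWB.
  have [sBD | notBD] := boolP (B <= D)%MS; last first.
    apply/esym/negbTE; apply: contra notBD => /andP[_ /eqP <-].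
    by rewrite genmxE -addsmxE addsmxSr.
  have sWBD : (col_mx W B <= D)%MS by rewrite col_mx_sub sWD.
  have sDWB : (D <= col_mx W B)%MS.
    by have [_ <-] := mxrank_leqif_sup sWBD; rewrite rD (eqP freeWB).
  rewrite (submx_trans sBD sDV) -genD; apply/esym/eqP/eq_genmx/eqmxP.
  by rewrite sWBD.
move=> B /andP[freeWB sBV]; rewrite !inE genmx_id eqxx !genmxE (eqP freeWB).
by rewrite eqxx col_mx_sub sWV sBV -addsmxE addsmxSl.
Qed.

Lemma card_subcodes_mul n p (V : 'M[F]_(p, n)) k :
  (#|subcodes V k| * \prod_(i < k) (q ^ k - q ^ i) =
   \prod_(i < k) (q ^ \rank V - q ^ i))%N.
Proof.
have free0 : row_free (0 : 'M[F]_(0, n)) by rewrite /row_free mxrank0.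
have := card_subcodes_sup k free0 (sub0mx 0 V); rewrite add0n.
under eq_bigr do rewrite add0n; under [in RHS]eq_bigr do rewrite add0n.
by under eq_finset => D do rewrite sub0mx andbT; rewrite cardsE.
Qed.

(* The division defining qbinom is exact: the quotient counts the
   b-dimensional subspaces of F^a. *)
Lemma qbinom_mul a b :
  (qbinom q a b * \prod_(i < b) (q ^ b - q ^ i) =
   \prod_(i < b) (q ^ a - q ^ i))%N.
Proof.
have := card_subcodes_mul (1%:M : 'M[F]_a) b; rewrite mxrank1 => countG.
suff -> : qbinom q a b = #|subcodes (1%:M : 'M[F]_a) b| by [].
move: countG; rewrite !(prod_subn_expn q_gt1) prod_expn_subn1_rev mulnCA.
move=> /eqP.
rewrite eqn_pmul2l ?prod_expn_gt0 // => /eqP countD.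
by rewrite /qbinom -countD mulnK ?prod_expnS_subn1_gt0.
Qed.

Lemma card_subcodes n p (V : 'M[F]_(p, n)) k :
  #|subcodes V k| = qbinom q (\rank V) k.
Proof.
apply/eqP; rewrite -(eqn_pmul2r (prod_subn_expn_gt0 q_gt1 k)).
by rewrite card_subcodes_mul qbinom_mul.
Qed.

Lemma card_subcodes_sup_row n p (V : 'M[F]_(p, n)) (x : 'rV[F]_n) m k :
  x != 0 -> (x <= V)%MS -> \rank V = m.+1 ->
  #|[set D in subcodes V k.+1 | (x <= D)%MS]| = qbinom q m k.
Proof.
move=> nz_x sxV rV; have freex : row_free x by rewrite /row_free rank_rV nz_x.
have := card_subcodes_sup k freex sxV; rewrite rV.
under eq_bigr do rewrite !add1n; under [in RHS]eq_bigr do rewrite add1n.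
rewrite !prod_subn_expnS -(qbinom_mul m k) mulnCA mulnA => /eqP.
rewrite -mulnA eqn_pmul2l ?expn_gt0 ?(ltnW q_gt1) //.
by rewrite eqn_pmul2r ?prod_subn_expn_gt0 // => /eqP.
Qed.

Lemma qbinomSS m k : (k <= m)%N ->
  qbinom q m.+1 k.+1 = (qbinom q m k + q ^ k.+1 * qbinom q m k.+1)%N.
Proof.
move=> le_km; apply/eqP; rewrite -(eqn_pmul2r (prod_subn_expn_gt0 q_gt1 k.+1)).
rewrite mulnDl !qbinom_mul -mulnA qbinom_mul !prod_subn_expn_recl.
rewrite !(mulnCA (qbinom q m k)) qbinom_mul big_ord_recr /=.
set P := (\prod_(i < k) _)%N.
have -> : (q ^ k.+1 * (P * (q ^ m - q ^ k)) =
          (q ^ m.+1 - q ^ k.+1) * (q ^ k * P))%N.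
  rewrite mulnCA [RHS]mulnA [RHS]mulnC; congr (P * _)%N.
  by rewrite mulnBr mulnBl -!expnD (addSn m) (addSn k m) (addnC m k).
have q1 : (1 <= q ^ k.+1)%N by rewrite expn_gt0 ltnW.
have qkm : (q ^ k.+1 <= q ^ m.+1)%N by rewrite leq_exp2l.
rewrite -mulnDl; apply/eqP; congr (_ * _)%N.
by move: q1 qkm; move: (q ^ k.+1)%N (q ^ m.+1)%N => a b; lia.
Qed.

End Subspaces.

Section Weights.
Variable F : finFieldType.

Lemma supp_codeE k n (D : 'M[F]_(k, n)) j :
  (j \in supp_code D) = (col j D != 0).
Proof.
rewrite inE; apply/existsP/idP => [[_ /andP[/submxP[u ->] uDj]] | ].
  apply: contraNneq uDj => Dj0; apply/eqP.
  have -> : (u *m D) 0 j = (u *m col j D) 0 0.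
    by rewrite !mxE; apply: eq_bigr => i _; rewrite !mxE.
  by rewrite Dj0 mulmx0 mxE.
case/matrix0Pn => i [j0 Dij]; exists (row i D).
by rewrite row_sub mxE; rewrite !mxE in Dij.
Qed.

Lemma wt_code0 k n : wt_code (0 : 'M[F]_(k, n)) = 0%N.
Proof.
apply/eqP; rewrite cards_eq0; apply/eqP/setP => j.
by rewrite supp_codeE inE linear0 eqxx.
Qed.

Lemma wt_code_full k n (D : 'M[F]_(k, n)) :
  ((const_mx 1 : 'rV_n) <= D)%MS -> wt_code D = n.
Proof.
move=> s1D; rewrite -[RHS]card_ord -cardsT; apply: eq_card => j; rewrite !inE.
by apply/existsP; exists (const_mx 1); rewrite s1D mxE oner_neq0.
Qed.

Lemma wt_code_le k n (D : 'M[F]_(k, n)) : (wt_code D <= n)%N.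
Proof. by rewrite -[X in (_ <= X)%N]card_ord max_card. Qed.

Lemma gen_wt_enumE k n (C : 'M[F]_(k, n)) r :
  gen_wt_enum C r =
    \sum_(D in subcodes C r) ('X^(n - wt_code D))%:P * 'X^(wt_code D).
Proof.
rewrite (partition_big (fun D => inord (wt_code D) : 'I_n.+1) xpredT) //=.
apply: eq_bigr => w _; rewrite /gen_wt_count mulr_natl polyCMn mulrnAl.
rewrite -sumr_const; apply: eq_big => [D | D]; rewrite !inE.
  by rewrite -!andbA -[inord _ == w](inj_eq val_inj) /= inordK // ltnS wt_code_le.
by case/and4P=> _ _ _ /eqP <-.
Qed.

End Weights.

Section ReedMuller.
Variables (F : finFieldType) (m : nat).
Local Notation q := #|F|.
Local Notation n := #|{: 'rV[F]_m}|.
Local Notation C := (RMgen F m).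
Local Notation ones := (const_mx 1 : 'rV[F]_n).

Lemma col_mul_RMgen p (B : 'M[F]_(p, 1 + m)) j :
  col j (B *m C) = lsubmx B + rsubmx B *m (enum_val j)^T.
Proof.
rewrite -{1}(hsubmxK B) mul_row_col; apply/matrixP => i k; rewrite (ord1 k) !mxE.
congr (_ + _); first by rewrite big_ord1 !mxE mulr1.
by apply: eq_bigr => l _; rewrite !mxE.
Qed.

Lemma RMgen_free : row_free C.
Proof.
rewrite -kermx_eq0; apply/eqP/row_matrixP => i; rewrite row0.
set u := row i (kermx C).
have uC : u *m C = 0 by rewrite -row_mul mulmx_ker row0.
have coord x : lsubmx u + rsubmx u *m x^T = 0.
  by rewrite -[x]enum_rankK -col_mul_RMgen uC col0.
have u0 : lsubmx u = 0 by have := coord 0; rewrite trmx0 mulmx0 addr0.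
have u1 : rsubmx u = 0.
  apply/rowP => k; have := coord (delta_mx 0 k).
  rewrite u0 add0r trmx_delta -colE => /matrixP/(_ 0 0).
  by rewrite !mxE.
by rewrite -[u]hsubmxK u0 u1 row_mx0.
Qed.

Lemma rank_RMgen : \rank C = m.+1.
Proof. exact/eqP/RMgen_free. Qed.

Lemma RMgen_length : n = (q ^ m)%N.
Proof. by rewrite card_mx mul1n. Qed.

Lemma ones_sub_RMgen : (ones <= C)%MS.
Proof. by rewrite -addsmxE addsmxSl. Qed.

Lemma ones_neq0 : ones != 0.
Proof.
apply/eqP => /matrixP/(_ 0 (enum_rank (0 : 'rV[F]_m))).
by rewrite !mxE => /eqP; rewrite oner_eq0.
Qed.

Lemma RMgen_zero_coords p (B : 'M[F]_(p, 1 + m)) j :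
  (j \notin supp_code (B *m C)) =
  (enum_val j *m (rsubmx B)^T == - (lsubmx B)^T).
Proof.
by rewrite supp_codeE negbK col_mul_RMgen -trmx_eq0 linearD /= trmx_mul trmxK
  addrC addr_eq0.
Qed.

Lemma wt_code_RMgen p (B : 'M[F]_(p, 1 + m)) :
  ~~ (row_mx 1 0 <= B)%MS -> wt_code (B *m C) = (n - q ^ (m - \rank B))%N.
Proof.
(* Coordinate x of F^m is a common zero iff x *m Bm^T = - b^T; this system
   is consistent because row_mx 1 0, the preimage of the all-one word, is not
   in the row space of B. *)
move=> eNB; set b := lsubmx B; set Bm := rsubmx B.
have rBm : \rank Bm = \rank B := mxrank_rsubmx eNB.
have consistent : (- b^T <= Bm^T)%MS.
  rewrite eqmx_opp; apply: submx_trans (addsmxSl b^T Bm^T) _.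
  have [_ <-] := mxrank_leqif_sup (addsmxSr b^T Bm^T).
  by rewrite addsmxE -tr_row_mx hsubmxK !mxrank_tr rBm.
have zeros : #|~: supp_code (B *m C)| = (q ^ (m - \rank B))%N.
  rewrite -rBm -mxrank_tr -(card_affine_solutions consistent).
  rewrite -(card_imset _ enum_val_inj); apply: eq_card => x.
  rewrite -[x]enum_rankK mem_imset; last exact: (can_inj enum_valK).
  by rewrite in_setC RMgen_zero_coords inE.
rewrite /wt_code -zeros -[X in (X - _)%N]card_ord.
by rewrite -(cardsC (supp_code (B *m C))) addnK.
Qed.

Lemma wt_subcode_RMgen D r : D \in subcodes C r ->
  wt_code D = if (ones <= D)%MS then n else (n - q ^ (m - r))%N.
Proof.
rewrite inE => /and3P[_ /eqP <- sDC].
case: ifPn => [|onesND]; first exact: wt_code_full.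
set B := D *m pinvmx C; have BC : B *m C = D := mulmxKpV sDC.
rewrite -BC mxrankMfree ?RMgen_free // wt_code_RMgen //.
apply: contra onesND => /(submxMr C); rewrite BC; apply: submx_trans.
by rewrite mul_row_col mul1mx mul0mx addr0.
Qed.

Lemma gen_wt_enum_RMgen0 : gen_wt_enum C 0 = ('X^n)%:P.
Proof.
rewrite gen_wt_enumE; have -> : subcodes C 0 = [set 0].
  apply/setP => D; rewrite !inE mxrank_eq0.
  by case: (D =P 0) => [-> | _]; rewrite ?andbF // genmx0 sub0mx eqxx.
by rewrite big_set1 wt_code0 subn0 expr0 mulr1.
Qed.

Lemma gen_wt_enum_RMgen_full : gen_wt_enum C m.+1 = 'X^n.
Proof.
rewrite gen_wt_enumE; have -> : subcodes C m.+1 = [set <<C>>%MS].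
  apply/setP => D; rewrite !inE; apply/and3P/eqP => [[/eqP genD /eqP rD sDC] | ->].
    rewrite -genD; apply/eq_genmx/eqmxP; rewrite sDC.
    have [_ <-] := mxrank_leqif_sup sDC.
    by rewrite rD rank_RMgen; exact: eqxx.
  by split; rewrite ?genmx_id ?genmxE ?rank_RMgen.
rewrite big_set1 wt_code_full ?genmxE ?ones_sub_RMgen //.
by rewrite subnn expr0 polyC1 mul1r.
Qed.

Lemma gen_wt_enum_RMgen k : (k < m)%N ->
  gen_wt_enum C k.+1 =
    ((qbinom q m k)%:R)%:P * 'X^n
    + ((q ^ k.+1 * qbinom q m k.+1)%N%:R * 'X^(q ^ (m - k.+1)))%:P
      * 'X^(n - q ^ (m - k.+1)).
Proof.
move=> lt_km; rewrite gen_wt_enumE.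
set S := subcodes C k.+1; set c := (q ^ (m - k.+1))%N.
have le_cn : (c <= n)%N.
  by rewrite RMgen_length leq_exp2l ?card_finNzRing_gt1 ?leq_subr.
have card_ones : #|[set D in S | (ones <= D)%MS]| = qbinom q m k.
  exact: card_subcodes_sup_row ones_neq0 ones_sub_RMgen rank_RMgen.
have card_other :
    #|[set D in S | ~~ (ones <= D)%MS]| = (q ^ k.+1 * qbinom q m k.+1)%N.
  apply/eqP; rewrite -(eqn_add2l (qbinom q m k)) -qbinomSS 1?ltnW //.
  rewrite -card_ones -rank_RMgen -card_subcodes.
  rewrite -(cardID [pred D | ones <= D]%MS S); apply/eqP.
  by congr (_ + _)%N; apply: eq_card => D; rewrite !inE // andbC.
rewrite (bigID (fun D => ones <= D)%MS) /=; congr (_ + _).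
  rewrite (eq_bigr (fun _ => 'X^n)) => [|D /andP[SD onesD]]; last first.
    by rewrite (wt_subcode_RMgen SD) onesD subnn expr0 polyC1 mul1r.
  rewrite sumr_const (@eq_card _ _ [set D in S | ones <= D]%MS) => [|D]; last first.
    by rewrite inE.
  by rewrite card_ones polyC_natr mulr_natl.
rewrite (eq_bigr (fun _ => ('X^c)%:P * 'X^(n - c))) => [|D /andP[SD onesND]]; last first.
  by rewrite (wt_subcode_RMgen SD) (negbTE onesND) subKn.
rewrite sumr_const (@eq_card _ _ [set D in S | ~~ (ones <= D)]%MS) => [|D]; last first.
  by rewrite inE.
by rewrite card_other -mulrnAl -polyCMn mulr_natl.
Qed.

End ReedMuller.

Theorem mainTheorem4 (F : finFieldType) (s : nat) : (1 <= s)%N ->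
  let q := #|F| in
  let n := (q ^ (s - 1))%N in
  (forall r : nat, (0 < r < s)%N ->
     gen_wt_enum (RMgen F (s - 1)) r =
       ((qbinom q (s - 1) (r - 1))%:R)%:P * 'X^n
       + ((q ^ r * qbinom q (s - 1) r)%N%:R * 'X^(q ^ (s - 1 - r)))%:P
         * 'X^(q ^ (s - 1) - q ^ (s - 1 - r)))
  /\ gen_wt_enum (RMgen F (s - 1)) 0 = ('X^n)%:P
  /\ gen_wt_enum (RMgen F (s - 1)) s = 'X^n.
Proof.
case: s => [//|m] _; rewrite subSS subn0 => q n; rewrite {}/n {}/q.
split; [case=> [//|k] /andP[_ lt_km] | split].
- by rewrite gen_wt_enum_RMgen // subSS subn0 RMgen_length.
- by rewrite gen_wt_enum_RMgen0 RMgen_length.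
- by rewrite gen_wt_enum_RMgen_full RMgen_length.
Qed.
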